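(* Let $A$ be a meet-complemented lattice in which $\Box x$ and $\Diamond x$ exist for every $x\in A$. Then for any $a\in A$ the following are equivalent: (i) $\Diamond\Box a\le\Box a$; (ii) $\Box a\le\Box\Box a$; (iii) $\Box a\vee\neg\Box a=1$; (iv) $\Box\Box a=\Box a$.
   Context: A meet-complemented lattice is a lattice $(L,\le)$ (not necessarily distributive) such that for every $a\in L$ the element $\neg a=\max\{b\in L: a\wedge b\le c\ \text{for all } c\in L\}$ exists; it is bounded with bottom $0$ and top $1$. For $a\in L$, $\Box a=\max\{b\in L: a\vee\neg b=1\}$ and $\Diamond a=\min\{b\in L: \neg a\vee b=1\}$. *)

From mathcomp Require Import all_boot all_order.
Set Implicit Arguments. Unset Strict Implicit. Unset Printing Implicit Defensive.
Import Order.LTheory.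
Local Open Scope order_scope.

Definition is_greatest (d : Order.disp_t) (T : porderType d) (P : T -> Prop) (m : T) :=
  P m /\ forall b, P b -> b <= m.

Definition is_least (d : Order.disp_t) (T : porderType d) (P : T -> Prop) (m : T) :=
  P m /\ forall b, P b -> m <= b.

Definition is_meet_complement (d : Order.disp_t) (T : tbLatticeType d) (neg : T -> T) :=
  forall a : T, is_greatest (fun b => forall c : T, a `&` b <= c) (neg a).

Definition is_box (d : Order.disp_t) (T : tbLatticeType d) (neg box : T -> T) :=
  forall a : T, is_greatest (fun b => a `|` neg b = \top) (box a).

Definition is_dia (d : Order.disp_t) (T : tbLatticeType d) (neg dia : T -> T) :=
  forall a : T, is_least (fun b => neg a `|` b = \top) (dia a).

(* Write ~ for the meet-complement. The only nontrivial fact is that box a is regular: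
   if x \/ ~b = 1 then ~x /\ b = 0 (its complement lies above both x and ~b), so
   box x <= ~~x, and the greatest b with x \/ ~b = 1 is closed under ~~ because
   ~~~ = ~. Hence box (box a) <= ~~(box a) = box a. With this, each of (i), (ii), (iv)
   is equivalent to box a being complemented, i.e. box a \/ ~(box a) = 1. *)

From mathcomp Require Import all_boot all_order.
Set Implicit Arguments. Unset Strict Implicit. Unset Printing Implicit Defensive.
Local Open Scope order_scope.
Import Order.LTheory.

Section MeetComplement.
Variables (d : Order.disp_t) (A : tbLatticeType d) (neg : A -> A).
Hypothesis neg_spec : is_meet_complement neg.

Lemma meetx_neg (x : A) : x `&` neg x = \bot.
Proof. by apply/eqP; rewrite -lex0; apply: (neg_spec x).1. Qed.

Lemma le_neg (x y : A) : x `&` y = \bot -> y <= neg x.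
Proof. by move=> xy0; apply: (neg_spec x).2 => c; rewrite xy0 le0x. Qed.

Lemma neg_eq1 (x : A) : neg x = \top -> x = \bot.
Proof. by move=> nx1; rewrite -(meetx1 x) -nx1 meetx_neg. Qed.

Lemma le_neg2 (x y : A) : x <= y -> neg y <= neg x.
Proof.
move=> le_xy; apply: le_neg; apply/eqP; rewrite -lex0 -(meetx_neg y).
by rewrite lexI leIr andbT (le_trans (leIl _ _) le_xy).
Qed.

Lemma le_negK (x : A) : x <= neg (neg x).
Proof. by apply: le_neg; rewrite meetC meetx_neg. Qed.

Lemma neg3 (x : A) : neg (neg (neg x)) = neg x.
Proof. by apply: le_anti; rewrite le_negK andbT le_neg2 // le_negK. Qed.

Lemma le_negK_of_join_neg (x b : A) : x `|` neg b = \top -> b <= neg (neg x).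
Proof.
move=> xnb1; apply: le_neg; apply: neg_eq1.
apply/eqP; rewrite eq_le lex1 /= -xnb1 leUx le_neg2 ?leIr // andbT.
apply: le_neg; apply/eqP; rewrite -lex0 -(meetx_neg x) lexI leIr /=.
exact: le_trans (leIl _ _) (leIl _ _).
Qed.

End MeetComplement.

Section Box.
Variables (d : Order.disp_t) (A : tbLatticeType d) (neg box : A -> A).
Hypotheses (neg_spec : is_meet_complement neg) (box_spec : is_box neg box).

Lemma box_negK (x : A) : neg (neg (box x)) = box x.
Proof.
apply: le_anti; rewrite le_negK //= andbT; apply: (box_spec x).2.
by rewrite neg3 //; apply: (box_spec x).1.
Qed.

Lemma box_le_negK (x : A) : box x <= neg (neg x).
Proof. by apply: le_negK_of_join_neg => //; apply: (box_spec x).1. Qed.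

Lemma box_box_le (x : A) : box (box x) <= box x.
Proof. by rewrite -[leRHS]box_negK box_le_negK. Qed.

Lemma le_boxE (b : A) : b <= box b <-> b `|` neg b = \top.
Proof.
split=> [le_b_box | bnb1]; last exact: (box_spec b).2.
apply/eqP; rewrite eq_le lex1 /= -(box_spec b).1 leUx leUl /=.
by rewrite (le_trans (le_neg2 neg_spec le_b_box)) ?leUr.
Qed.

End Box.

Lemma dia_leE (d : Order.disp_t) (A : tbLatticeType d) (neg dia : A -> A)
  (dia_spec : is_dia neg dia) (b : A) :
  dia b <= b <-> b `|` neg b = \top.
Proof.
split=> [dia_le_b | bnb1]; last by apply: (dia_spec b).2; rewrite joinC.
apply/eqP; rewrite eq_le lex1 /= -(dia_spec b).1 leUx leUr /=.
by rewrite (le_trans dia_le_b) ?leUl.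
Qed.

Theorem proposition17 (d : Order.disp_t) (A : tbLatticeType d)
  (neg box dia : A -> A)
  (Hneg : is_meet_complement neg) (Hbox : is_box neg box) (Hdia : is_dia neg dia)
  (a : A) :
  (dia (box a) <= box a <-> box a <= box (box a)) /\
  (box a <= box (box a) <-> box a `|` neg (box a) = \top) /\
  (box a `|` neg (box a) = \top <-> box (box a) = box a).
Proof.
have le_box := le_boxE Hneg Hbox (box a).
have dia_le := dia_leE Hdia (box a).
have boxK : box (box a) = box a <-> box a <= box (box a).
  split=> [-> // | le_box_box].
  by apply: le_anti; rewrite le_box_box (box_box_le Hneg Hbox).
split; last split.
- exact: iff_trans dia_le (iff_sym le_box).
- exact: le_box.
- exact: iff_sym (iff_trans boxK le_box).
Qed.
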